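(* Let $N\ge1$, $R>0$, and for $i=1,\dots,N$ let $D_i>0$, $b_i>0$, $a_i\in\mathbb{R}$. Let $c_i(q):=-\dfrac{a_i}{b_i}-\dfrac{1}{b_i}\big[\ln(1-q)-\ln q\big]$ for $q\in(0,1)$, and for $\bm q\in(0,1)^N$ define $$g'(\bm q):=\sum_{i=1}^N\big(R D_i q_i c_i(q_i)-D_i q_i\big).$$ For $\lambda\in(0,\infty)$ define $$q_i(\lambda):=\frac{W\big(\exp(a_i+\frac{b_i}{\lambda R}+\frac{b_i}{R}-1)\big)}{W\big(\exp(a_i+\frac{b_i}{\lambda R}+\frac{b_i}{R}-1)\big)+1},\qquad g'(\lambda):=g'\big(q_1(\lambda),\dots,q_N(\lambda)\big).$$ Then $g'(\bm q)$ is strongly convex on $(0,1)^N$; $g'(\lambda)$ is strictly decreasing on $(0,\infty)$; and $\lim_{\lambda\to0^+}g'(\lambda)>0$.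
   Context: $W$ denotes the Lambert $W$ function on $(0,\infty)$: the inverse of $x\mapsto xe^x$ on $(0,\infty)$. $R$ is a lower bound on return on investment; $g'$ is the ROI-constraint function. *)

From HB Require Import structures.
From mathcomp Require Import all_boot all_order all_algebra.
From mathcomp Require Import all_classical all_reals all_analysis.
Set Implicit Arguments. Unset Strict Implicit. Unset Printing Implicit Defensive.
Import Order.TTheory GRing.Theory Num.Theory.
Import numFieldNormedType.Exports.
Local Open Scope classical_set_scope.
Local Open Scope ring_scope.

Definition lambertW {R : realType} (y : R) : R :=
  xget 0 [set x : R | 0 < x /\ x * expR x = y].

Definition cfun {R : realType} (a b q : R) : R :=
  - (a / b) - b^-1 * (ln (1 - q) - ln q).

Definition gq {R : realType} (N : nat) (Rr : R) (D b a : 'I_N -> R)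
  (q : 'I_N -> R) : R :=
  \sum_(i < N) (Rr * D i * q i * cfun (a i) (b i) (q i) - D i * q i).

Definition qlam {R : realType} (Rr a b lam : R) : R :=
  let w := lambertW (expR (a + b / (lam * Rr) + b / Rr - 1)) in w / (w + 1).

Definition glam {R : realType} (N : nat) (Rr : R) (D b a : 'I_N -> R)
  (lam : R) : R :=
  gq Rr D b a (fun i => qlam Rr (a i) (b i) lam).

Definition cube01 {R : realType} (N : nat) : set ('I_N -> R) :=
  [set q | forall i, 0 < q i < 1].

Definition strongly_convex_on {R : realType} (N : nat)
  (S : set ('I_N -> R)) (f : ('I_N -> R) -> R) : Prop :=
  exists m : R, 0 < m /\
    forall x y, S x -> S y -> forall t : R, 0 <= t <= 1 ->
      f (fun i => t * x i + (1 - t) * y i) <=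
      t * f x + (1 - t) * f y
      - m / 2 * t * (1 - t) * \sum_(i < N) (x i - y i) ^+ 2.

(* Each summand of [g'] is [K q logit q - (K a + D) q] with [K = R D / b > 0], and
   [q logit q] lies above its tangents by at least [(y - x)^2 / 4], which follows
   from [ln z <= z - 1] alone; this gives strong convexity.  The point
   [q_i(lambda)] is exactly where the slope of the i-th summand is [D_i / lambda > 0],
   and [q_i] decreases with [lambda] because [W] increases, so the tangent
   inequality at [q_i(lambda2)] shows that every summand decreases.  Being
   monotone, [g'] has a limit at [0+], which is at least its value at an explicit
   small [lambda] where every summand is positive. *)

From HB Require Import structures.
From mathcomp Require Import all_boot all_order all_algebra.
From mathcomp Require Import all_classical all_reals all_analysis.
From mathcomp Require Import ring lra.
Set Implicit Arguments. Unset Strict Implicit. Unset Printing Implicit Defensive.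
Import Order.TTheory GRing.Theory Num.Theory.
Import numFieldNormedType.Exports.
Local Open Scope classical_set_scope.
Local Open Scope ring_scope.

Section RealFacts.
Variable R : realType.
Implicit Types x y t : R.

Lemma ln_le_subr1 x : 0 < x -> ln x <= x - 1.
Proof. by move=> x0; have := @le_ln1Dx R (x - 1); rewrite addrCA subrr addr0; apply; lra. Qed.

Lemma mulr_ln_div_le x y : 0 < x -> 0 < y -> y * (ln x - ln y) <= x - y.
Proof.
move=> x0 y0; rewrite -ln_div ?posrE //.
have := ler_wpM2l (ltW y0) (ln_le_subr1 (divr_gt0 x0 y0)).
by rewrite mulrBr mulr1 mulrCA divff ?gt_eqF // mulr1.
Qed.

Lemma ln_le_sqrt x : 0 < x -> ln x <= 2 * (Num.sqrt x - 1).
Proof.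
move=> x0; have s0 : 0 < Num.sqrt x by rewrite sqrtr_gt0.
rewrite -[in ln x](sqr_sqrtr (ltW x0)) lnXn // mulr2n.
by have := ln_le_subr1 s0; lra.
Qed.

Lemma convex_comb_itv01 x y t : 0 < x < 1 -> 0 < y < 1 -> 0 <= t <= 1 ->
  0 < t * x + (1 - t) * y < 1.
Proof.
move=> /andP[x0 x1] /andP[y0 y1] /andP[t0 t1].
have t1' : 0 <= 1 - t by lra.
have [le_xy|/ltW le_yx] := lerP x y.
  have := mulr_ge0 t0 (_ : 0 <= y - x); have := mulr_ge0 t1' (_ : 0 <= y - x).
  by move=> h1 h2; apply/andP; split; nra.
have := mulr_ge0 t0 (_ : 0 <= x - y); have := mulr_ge0 t1' (_ : 0 <= x - y).
by move=> h1 h2; apply/andP; split; nra.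
Qed.

Lemma convex_comb_le_of_tangent (I : set R) (f g : R -> R) (c : R) :
  (forall x y, I x -> I y -> f x + g x * (y - x) + c * (y - x) ^+ 2 <= f y) ->
  forall x y t, I x -> I y -> 0 <= t <= 1 -> I (t * x + (1 - t) * y) ->
  f (t * x + (1 - t) * y) <=
    t * f x + (1 - t) * f y - c * t * (1 - t) * (x - y) ^+ 2.
Proof.
move=> tangent x y t Ix Iy /andP[t0 t1] Iz; set z := t * x + (1 - t) * y.
have t1' : 0 <= 1 - t by lra.
have := ler_wpM2l t0 (tangent _ _ Iz Ix).
have := ler_wpM2l t1' (tangent _ _ Iz Iy).
have : t * (f z + g z * (x - z) + c * (x - z) ^+ 2) +
       (1 - t) * (f z + g z * (y - z) + c * (y - z) ^+ 2) =
       f z + c * t * (1 - t) * (x - y) ^+ 2 by rewrite /z; ring.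
lra.
Qed.

End RealFacts.

Section Cube.
Variables (R : realType) (N : nat).

Lemma finite_pos_lbound (c : 'I_N -> R) : (forall i, 0 < c i) ->
  exists2 m, 0 < m & forall i, m <= c i.
Proof.
move=> c_gt0; have inv_ge0 i : 0 <= (c i)^-1 by rewrite invr_ge0 ltW.
have S_ge0 : 0 <= \sum_(i < N) (c i)^-1 by exact: sumr_ge0.
exists (1 + \sum_(i < N) (c i)^-1)^-1; first by rewrite invr_gt0; lra.
move=> i; rewrite -[c i]invrK lef_pV2 ?posrE ?invr_gt0 //; last lra.
have : (c i)^-1 <= \sum_(j < N) (c j)^-1 by rewrite (bigD1 i) //= lerDl sumr_ge0.
lra.
Qed.

Lemma strongly_convex_on_cube01_sum (f : 'I_N -> R -> R) (c : 'I_N -> R) :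
  (forall i, 0 < c i) ->
  (forall i x y t, 0 < x < 1 -> 0 < y < 1 -> 0 <= t <= 1 ->
     f i (t * x + (1 - t) * y) <=
       t * f i x + (1 - t) * f i y - c i * t * (1 - t) * (x - y) ^+ 2) ->
  strongly_convex_on (@cube01 R N) (fun q => \sum_(i < N) f i (q i)).
Proof.
move=> c_gt0 f_convex; have [m m_gt0 m_le] := finite_pos_lbound c_gt0.
exists (2 * m); split; first by rewrite mulr_gt0.
move=> x y x01 y01 t t01; rewrite (mulrC 2) mulfK ?pnatr_eq0 //.
rewrite !mulr_sumr -big_split -sumrB /=; apply: ler_sum => i _.
apply: (le_trans (f_convex i _ _ _ (x01 i) (y01 i) t01)).
have : 0 <= t * (1 - t) * (x i - y i) ^+ 2.
  by case/andP: t01 => t0 t1; rewrite mulr_ge0 ?sqr_ge0 // mulr_ge0 ?subr_ge0.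
by have := m_le i; nra.
Qed.

Lemma ltr_sum_ord (F G : 'I_N -> R) : (0 < N)%N ->
  (forall i, F i < G i) -> \sum_(i < N) F i < \sum_(i < N) G i.
Proof.
move=> N_gt0 FG; apply: ltr_sum => //.
by apply/hasP; exists (Ordinal N_gt0); rewrite ?mem_index_enum.
Qed.

End Cube.

Section LambertW.
Variable R : realType.
Implicit Types x y w : R.

Lemma ltr_xexpR x y : 0 <= x -> x < y -> x * expR x < y * expR y.
Proof.
move=> x0 xy; apply: (@le_lt_trans _ _ (x * expR y)).
  by rewrite ler_wpM2l // ler_expR ltW.
by rewrite ltr_pM2r ?expR_gt0.
Qed.

Lemma lambertW_spec y : 0 < y -> 0 < lambertW y /\ lambertW y * expR (lambertW y) = y.
Proof.
move=> y0; apply: (@xgetPex _ 0 [set x : R | 0 < x /\ x * expR x = y]).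
have [] := @IVT R (fun x => x * expR x) 0 y y (ltW y0).
- move=> x; apply: continuous_subspaceT => z.
  by apply: cvgM; [exact: cvg_id | exact: continuous_expR].
- rewrite mul0r ge_min le_max (ltW y0) /=.
  by apply/orP; right; rewrite ler_peMr ?ltW // expR_gt1.
move=> x; rewrite in_itv /= => /andP[x0 _] xy; exists x; split => //.
by rewrite lt_neqAle x0 andbT; apply/eqP => x0E; move: y0; rewrite -xy -x0E mul0r ltxx.
Qed.

Lemma lambertW_gt0 y : 0 < y -> 0 < lambertW y.
Proof. by case/lambertW_spec. Qed.

Lemma lambertWK w : 0 < w -> lambertW (w * expR w) = w.
Proof.
move=> w0; have [v0 vE] := lambertW_spec (mulr_gt0 w0 (expR_gt0 w)).
set v := lambertW _ in v0 vE *.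
by case: (ltgtP v w) => // [/(ltr_xexpR (ltW v0))|/(ltr_xexpR (ltW w0))]; rewrite vE ltxx.
Qed.

Lemma ltr_lambertW x y : 0 < x -> x < y -> lambertW x < lambertW y.
Proof.
move=> x0 xy; have [Wx0 WxE] := lambertW_spec x0.
have [Wy0 WyE] := lambertW_spec (lt_trans x0 xy).
rewrite ltNge; apply/negP; rewrite le_eqVlt => /predU1P[WE|].
  by move: xy; rewrite -WxE -WyE WE ltxx.
by move/(ltr_xexpR (ltW Wy0)); rewrite WxE WyE => /(lt_trans xy); rewrite ltxx.
Qed.

Lemma ln_lambertW_expR x : ln (lambertW (expR x)) = x - lambertW (expR x).
Proof.
have [w0 wE] := lambertW_spec (expR_gt0 x); set w := lambertW _ in w0 wE *.
by rewrite -[in x](expRK x) -wE lnM ?posrE ?expR_gt0 // expRK addrK.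
Qed.

End LambertW.

Section Logit.
Variable R : realType.
Implicit Types x y w : R.

Definition logit x := ln x - ln (1 - x).
Definition qlogit x := x * logit x.
Definition qlogit_slope x := logit x + (1 - x)^-1.

Lemma subr_frac1 w : 0 < w -> 1 - w / (w + 1) = (w + 1)^-1.
Proof. by move=> w0; field; rewrite gt_eqF //; lra. Qed.

Lemma frac1_itv01 w : 0 < w -> 0 < w / (w + 1) < 1.
Proof.
move=> w0; rewrite divr_gt0 //=; last lra.
by rewrite ltr_pdivrMr ?mul1r; lra.
Qed.

Lemma ltr_frac1 x y : 0 < x -> x < y -> x / (x + 1) < y / (y + 1).
Proof.
move=> x0 xy; have x1 : 0 < x + 1 by lra.
have y1 : 0 < y + 1 by lra.
have -> : y / (y + 1) = x / (x + 1) + (y - x) / ((x + 1) * (y + 1)).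
  by field; rewrite !gt_eqF.
by rewrite ltrDl divr_gt0 ?mulr_gt0 ?subr_gt0.
Qed.

Lemma logit_frac1 w : 0 < w -> logit (w / (w + 1)) = ln w.
Proof.
move=> w0; have w1 : 0 < w + 1 by lra.
by rewrite /logit subr_frac1 // lnV ?ln_div ?posrE // opprK subrK.
Qed.

Lemma mul_ln_tangent x y : 0 < x -> 0 < y ->
  x * ln x + (ln x + 1) * (y - x) <= y * ln y.
Proof. by move=> x0 y0; have := mulr_ln_div_le x0 y0; lra. Qed.

(* With [w = 1 - x], [v = 1 - y] and [s = sqrt (v / w)], the gap of the tangent
   is at least [(1 - s)^2] because [ln (v / w) <= 2 (s - 1)]; and
   [y - x = w (1 - s) (1 + s)] with [w (1 + s) = w + sqrt (w v) <= 2]. *)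
Lemma mul_ln1B_tangent x y : 0 < x < 1 -> 0 < y < 1 ->
  - (x * ln (1 - x)) + ((1 - x)^-1 - 1 - ln (1 - x)) * (y - x) + (y - x) ^+ 2 / 4
  <= - (y * ln (1 - y)).
Proof.
move=> /andP[x0 x1] /andP[y0 y1].
have w0 : 0 < 1 - x by lra.
have v0 : 0 < 1 - y by lra.
have w1 : 1 - x < 1 by lra.
have v1 : 1 - y < 1 by lra.
have [-> ->] : x = 1 - (1 - x) /\ y = 1 - (1 - y) by split; ring.
move: (1 - x) (1 - y) w0 v0 w1 v1 => w v w0 v0 w1 v1 {x y x0 x1 y0 y1}.
rewrite !(subKr 1) (_ : 1 - v - (1 - w) = w - v); last ring.
set s := Num.sqrt (v / w).
have s0 : 0 < s by rewrite sqrtr_gt0 divr_gt0.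
have vE : v = w * s ^+ 2 by rewrite sqr_sqrtr ?divr_ge0 ?ltW // mulrC divfK ?gt_eqF.
have hv := mulr_ln_div_le w0 v0.
have hs : ln v - ln w <= 2 * (s - 1) by rewrite -ln_div ?posrE // ln_le_sqrt ?divr_gt0.
have wvE : (w - v) / w = 1 - s ^+ 2 by rewrite vE; field; rewrite gt_eqF.
have ws2 : w * (1 + s) <= 2.
  have : (w * s) ^+ 2 < 1 by rewrite exprMn expr2 -mulrA -vE; nra.
  nra.
have hq : (w - v) ^+ 2 / 4 <= (1 - s) ^+ 2.
  have -> : (w - v) ^+ 2 = (1 - s) ^+ 2 * (w * (1 + s)) ^+ 2 by rewrite vE; ring.
  have : (w * (1 + s)) ^+ 2 <= 4 by nra.
  have := sqr_ge0 (1 - s); nra.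
clearbody s; lra.
Qed.

Lemma qlogit_tangent x y : 0 < x < 1 -> 0 < y < 1 ->
  qlogit x + qlogit_slope x * (y - x) + (y - x) ^+ 2 / 4 <= qlogit y.
Proof.
move=> x01 y01; have /andP[x0 _] := x01; have /andP[y0 _] := y01.
have := mul_ln_tangent x0 y0; have := mul_ln1B_tangent x01 y01.
rewrite /qlogit /qlogit_slope /logit; lra.
Qed.

End Logit.

Section Term.
Variables (R : realType) (Rr D a b : R).
Hypotheses (Rr0 : 0 < Rr) (D0 : 0 < D) (b0 : 0 < b).
Implicit Types x y t lam : R.

Definition gterm q := Rr * D * q * cfun a b q - D * q.
Definition gterm_slope q := Rr * D / b * (qlogit_slope q - a) - D.

Lemma gtermE q : gterm q = q * (Rr * D / b * (logit q - a) - D).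
Proof. by rewrite /gterm /cfun /logit; ring. Qed.

Let K_gt0 : 0 < Rr * D / b. Proof. by rewrite divr_gt0 ?mulr_gt0. Qed.

Lemma gterm_tangent x y : 0 < x < 1 -> 0 < y < 1 ->
  gterm x + gterm_slope x * (y - x) + Rr * D / b / 4 * (y - x) ^+ 2 <= gterm y.
Proof.
move=> x01 y01; have := ler_wpM2l (ltW K_gt0) (qlogit_tangent x01 y01).
by rewrite !gtermE /gterm_slope /qlogit; lra.
Qed.

Lemma gterm_convex x y t : 0 < x < 1 -> 0 < y < 1 -> 0 <= t <= 1 ->
  gterm (t * x + (1 - t) * y) <=
    t * gterm x + (1 - t) * gterm y - Rr * D / b / 4 * t * (1 - t) * (x - y) ^+ 2.
Proof.
move=> x01 y01 t01.
apply: (convex_comb_le_of_tangent (I := fun q => 0 < q < 1) gterm_tangent) => //.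
exact: convex_comb_itv01.
Qed.

Definition wlam lam := lambertW (expR (a + b / (lam * Rr) + b / Rr - 1)).

Lemma qlamE lam : qlam Rr a b lam = wlam lam / (wlam lam + 1).
Proof. by []. Qed.

Lemma wlam_gt0 lam : 0 < wlam lam.
Proof. exact/lambertW_gt0/expR_gt0. Qed.

Lemma qlam_itv01 lam : 0 < qlam Rr a b lam < 1.
Proof. exact/frac1_itv01/wlam_gt0. Qed.

Lemma ltr_qlam l1 l2 : 0 < l1 -> l1 < l2 -> qlam Rr a b l2 < qlam Rr a b l1.
Proof.
move=> l10 l12; rewrite !qlamE ltr_frac1 ?wlam_gt0 //.
rewrite ltr_lambertW ?expR_gt0 // ltr_expR ltrD2r ltrD2r ltrD2l.
by rewrite ltr_pM2l // ltf_pV2 ?posrE ?mulr_gt0 ?ltr_pM2r // (lt_trans l10).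
Qed.

Lemma gterm_slope_qlam lam : 0 < lam -> gterm_slope (qlam Rr a b lam) = D / lam.
Proof.
move=> lam0; rewrite qlamE /gterm_slope /qlogit_slope.
rewrite logit_frac1 ?subr_frac1 ?wlam_gt0 // invrK /wlam ln_lambertW_expR.
by field; rewrite !gt_eqF.
Qed.

Lemma gterm_qlam_decreasing l1 l2 : 0 < l1 -> l1 < l2 ->
  gterm (qlam Rr a b l2) < gterm (qlam Rr a b l1).
Proof.
move=> l10 l12; have l20 := lt_trans l10 l12.
have := gterm_tangent (qlam_itv01 l2) (qlam_itv01 l1).
rewrite gterm_slope_qlam //; apply: lt_le_trans; rewrite -addrA ltrDl.
set dq := qlam Rr a b l1 - qlam Rr a b l2.
have dq_gt0 : 0 < dq by rewrite subr_gt0 ltr_qlam.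
have : 0 <= Rr * D / b / 4 * dq ^+ 2.
  by rewrite mulr_ge0 ?sqr_ge0 // divr_ge0 // ltW.
by have := mulr_gt0 (divr_gt0 D0 l20) dq_gt0; lra.
Qed.

(* At [lam0 := b / (Rr (w0 + 2))] with [w0 := expR (a + b / Rr + 1)] the exponent
   is [ln w0 + w0], so [wlam lam0 = w0] and [logit (qlam lam0) = a + b / Rr + 1]. *)
Lemma gterm_qlam_gt0 lam : 0 < lam <= b / (Rr * (expR (a + b / Rr + 1) + 2)) ->
  0 < gterm (qlam Rr a b lam).
Proof.
set w0 := expR _; set lam0 := _ / _ => /andP[lam_gt0 lam_le].
have w0_gt0 : 0 < w0 by exact: expR_gt0.
have lnw0 : ln w0 = a + b / Rr + 1 by rewrite expRK.
have wlam0 : wlam lam0 = w0.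
  rewrite /wlam (_ : _ + _ - 1 = ln w0 + w0).
    by rewrite expRD lnK ?posrE // lambertWK.
  by rewrite lnw0 /lam0; field; rewrite !gt_eqF //; lra.
have : 0 < gterm (qlam Rr a b lam0).
  rewrite gtermE qlamE wlam0 logit_frac1 // lnw0.
  have -> : Rr * D / b * (a + b / Rr + 1 - a) - D = Rr * D / b.
    by field; rewrite !gt_eqF.
  by rewrite mulr_gt0 ?(andP (frac1_itv01 w0_gt0)).1.
move: lam_le; rewrite le_eqVlt => /predU1P[-> //|lt_lam].
by move/lt_trans; apply; exact: gterm_qlam_decreasing.
Qed.

End Term.

Section Glam.
Variables (R : realType) (N : nat) (Rr : R) (D b a : 'I_N -> R).
Hypotheses (N_gt0 : (0 < N)%N) (Rr0 : 0 < Rr).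
Hypotheses (D0 : forall i, 0 < D i) (b0 : forall i, 0 < b i).

Lemma gq_strongly_convex : strongly_convex_on (@cube01 R N) (gq Rr D b a).
Proof.
apply: (@strongly_convex_on_cube01_sum _ _ (fun i => gterm Rr (D i) (a i) (b i))
  (fun i => Rr * D i / b i / 4)).
  by move=> i; rewrite !divr_gt0 ?mulr_gt0.
by move=> i x y t; exact: gterm_convex.
Qed.

Lemma glam_decreasing l1 l2 : 0 < l1 -> l1 < l2 -> glam Rr D b a l2 < glam Rr D b a l1.
Proof. by move=> l10 l12; apply: ltr_sum_ord => // i; exact: gterm_qlam_decreasing. Qed.

Lemma exists_glam_gt0 : exists2 lam, 0 < lam & 0 < glam Rr D b a lam.
Proof.
have [lam lam_gt0 lam_le] :
    exists2 m, 0 < m & forall i, m <= b i / (Rr * (expR (a i + b i / Rr + 1) + 2)).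
  by apply: finite_pos_lbound => i; rewrite divr_gt0 ?mulr_gt0 ?addr_gt0 ?expR_gt0.
have sum0 : \sum_(i < N) (0 : R) = 0 by rewrite big1.
exists lam => //; rewrite -sum0.
by apply: ltr_sum_ord => // i; rewrite gterm_qlam_gt0 ?lam_gt0 ?lam_le.
Qed.

Lemma glam_cvg_right0 : exists l : \bar R,
  ((glam Rr D b a x)%:E @[x --> 0^'+] --> l) /\ (0 < l)%E.
Proof.
eexists; split.
  apply: (nonincreasing_at_right_cvge (BInfty _ false)) => // x y.
  rewrite !in_itv /= !andbT => x0 y0; rewrite le_eqVlt lee_fin => /predU1P[-> //|xy].
  exact/ltW/glam_decreasing.
have [lam lam_gt0 glam_gt0] := exists_glam_gt0.
apply: (@lt_le_trans _ _ (glam Rr D b a lam)%:E); first by rewrite lte_fin.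
by apply: ereal_sup_ubound; exists lam; rewrite //= in_itv /= lam_gt0.
Qed.

End Glam.

Theorem theorem5 (R : realType) (N : nat) (Rr : R) (D b a : 'I_N -> R) :
  (0 < N)%N -> 0 < Rr ->
  (forall i, 0 < D i) -> (forall i, 0 < b i) ->
  [/\ strongly_convex_on (@cube01 R N) (gq Rr D b a),
      (forall l1 l2 : R, 0 < l1 -> l1 < l2 -> glam Rr D b a l2 < glam Rr D b a l1)
    & exists l : \bar R,
        ((glam Rr D b a x)%:E @[x --> 0^'+] --> l) /\ (0 < l)%E ].
Proof.
move=> N_gt0 Rr0 D0 b0; split.
- exact: gq_strongly_convex.
- exact: glam_decreasing.
- exact: glam_cvg_right0.
Qed.
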